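(* Let $G$ be a map graph with a corresponding planar bipartite graph $B$, let $k$ be a positive integer, let $\mathcal{D}=(T,\beta_{\mathcal{D}})$ be a nice tree decomposition of $B$ of width less than $5\sqrt{2k}$, and let $\mathcal{D}'=(T,\beta_{\mathcal{D}'})$ be the tree decomposition of $G$ derived from $\mathcal{D}$. Let $C$ be a cycle in $G$ and let $K$ be a special clique of $G$. Then there is a cycle $C'$ in $G$ of the same length as $C$ such that $E(C')\setminus E(K)=E(C)\setminus E(K)$ and, for every node $t\in V(T)$, the number of edges of $E(C')\cap E(K)$ with one endpoint in $\mathsf{Fake}(t)\cap K$ and the other in $V(G)\setminus\gamma_{\mathcal{D}'}(t)$ is at most $4$.
   Context: All graphs are finite and simple; $E(K)$ denotes the set of edges of $G$ with both endpoints in $K$. For a bipartite graph $B$ with bipartition $V(B)=W\uplus U$, the half-square of $B$ is the graph on $W$ in which two vertices are adjacent iff they are at distance exactly $2$ in $B$. A graph $G$ is a map graph iff it is the half-square of some planar bipartite graph $B$; such $B$ (with $W=V(G)$) is a corresponding planar bipartite graph, and $S(G)=U$ is the set of special vertices; for $s\in S(G)$, $N_B(s)$ is a clique of $G$ called a special clique. A tree decomposition $(T,\beta)$: rooted tree, bags covering all vertices and edges, each vertex's nodes inducing a connected subtree; width is max bag size minus one. $\gamma_{\mathcal{D}}(t)$ (resp. $\gamma_{\mathcal{D}'}(t)$) is the union of bags at $t$ and its descendants. A nice tree decomposition has empty root bag and leaf, introduce, forget and join nodes in the standard sense. The derived decomposition has the same tree and bags $\beta_{\mathcal{D}'}(t)=(\beta_{\mathcal{D}}(t)\cap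 V(G))\cup\bigcup_{s\in\beta_{\mathcal{D}}(t)\cap S(G)}(N_B(s)\cap\gamma_{\mathcal{D}}(t))$, and $\mathsf{Fake}(t)=\beta_{\mathcal{D}'}(t)\setminus\beta_{\mathcal{D}}(t)$. *)

From Stdlib Require Import Reals.
From mathcomp Require Import all_boot.

Set Implicit Arguments.
Unset Strict Implicit.
Unset Printing Implicit Defensive.

(* A graph (V, e) is planar if its vertices can be mapped injectively to
   points of R^2 and each edge {x,y} drawn as a simple arc (continuous
   injective image of [0,1]) from x to y, such that an arc contains no
   vertex point other than its endpoints, and arcs of distinct edges only
   meet in common endpoints.  [curve x y] is the drawing of the edge {x,y}
   (used for e x y; the drawings of (x,y) and (y,x) are not compared). *)
Definition in01 (t : R) : Prop := Rle R0 t /\ Rle t R1.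

Definition planar (V : finType) (e : rel V) : Prop :=
  exists (p : V -> R * R) (curve : V -> V -> R -> R * R),
    injective p /\
    (forall x y, e x y ->
       [/\ curve x y R0 = p x, curve x y R1 = p y,
           continuity (fun t => fst (curve x y t)),
           continuity (fun t => snd (curve x y t)) &
           (forall t1 t2, in01 t1 -> in01 t2 ->
              curve x y t1 = curve x y t2 -> t1 = t2)]) /\
    (forall x y z t, e x y -> in01 t -> curve x y t = p z -> z = x \/ z = y) /\
    (forall x y x' y' t t', e x y -> e x' y' ->
       [set x; y] != [set x'; y'] -> in01 t -> in01 t' ->
       curve x y t = curve x' y' t' ->
       exists z, [/\ z \in [set x; y], z \in [set x'; y'] & curve x y t = p z]).

(* A bipartite graph B with bipartition W (+) U is given by its
   adjacency [adj : W -> U -> bool]; [Bedge adj] is its edge relation on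
   the vertex set W + U. *)
Definition Bedge (W U : finType) (adj : W -> U -> bool) : rel (W + U) :=
  fun a b => match a, b with
             | inl w, inr u => adj w u
             | inr u, inl w => adj w u
             | _, _ => false
             end.

Definition half_square (W U : finType) (adj : W -> U -> bool) : rel W :=
  fun x y => (x != y) && [exists u, adj x u && adj y u].

Definition map_graph_with (W U : finType) (eG : rel W)
  (adj : W -> U -> bool) : Prop :=
  (forall x y, eG x y = half_square adj x y) /\ planar (Bedge adj).

Definition special_clique (W U : finType) (adj : W -> U -> bool) (s : U)
  : {set W} := [set w | adj w s].

Definition rooted_tree (N : finType) (par : N -> N) (r : N) : Prop :=
  par r = r /\ forall t, exists n, iter n par t = r.

Definition tedge (N : finType) (par : N -> N) : rel N :=
  fun a b => (a != b) && ((par a == b) || (par b == a)).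

Definition children (N : finType) (par : N -> N) (t : N) : {set N} :=
  [set c | (par c == t) && (c != t)].

Definition descendant (N : finType) (par : N -> N) (t' t : N) : bool :=
  connect (fun a b => par a == b) t' t.

Definition tree_decomposition (V N : finType) (e : rel V)
  (par : N -> N) (r : N) (beta : N -> {set V}) : Prop :=
  [/\ rooted_tree par r,
      (forall v, exists t, v \in beta t),
      (forall x y, e x y -> exists t, x \in beta t /\ y \in beta t) &
      (forall v t1 t2, v \in beta t1 -> v \in beta t2 ->
         connect (fun a b => [&& tedge par a b, v \in beta a & v \in beta b])
           t1 t2)].

Definition nice_tree_decomposition (V N : finType) (e : rel V)
  (par : N -> N) (r : N) (beta : N -> {set V}) : Prop :=
  [/\ tree_decomposition e par r beta,
      beta r = set0 &
      forall t,
        (children par t = set0 /\ beta t = set0) \/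
        (exists c v, [/\ children par t = [set c], v \notin beta c &
                         beta t = v |: beta c]) \/
        (exists c v, [/\ children par t = [set c], v \in beta c &
                         beta t = beta c :\ v]) \/
        (exists c1 c2, [/\ c1 != c2, children par t = [set c1; c2],
                           beta t = beta c1 & beta t = beta c2])].

Definition width_lt_5sqrt2k (V N : finType) (beta : N -> {set V}) (k : nat)
  : Prop :=
  forall t, Rlt (Rminus (INR #|beta t|) R1)
                (Rmult (IZR 5) (sqrt (Rmult (IZR 2) (INR k)))).

Definition gammaD (V N : finType) (par : N -> N) (beta : N -> {set V})
  (t : N) : {set V} :=
  \bigcup_(t' | descendant par t' t) beta t'.

Definition betaD' (W U N : finType) (adj : W -> U -> bool) (par : N -> N)
  (beta : N -> {set (W + U)}) (t : N) : {set W} :=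
  [set w | (inl w : W + U) \in beta t] :|:
  [set w | [exists s, [&& (inr s : W + U) \in beta t, adj w s &
                         (inl w : W + U) \in gammaD par beta t]]].

Definition Fake (W U N : finType) (adj : W -> U -> bool) (par : N -> N)
  (beta : N -> {set (W + U)}) (t : N) : {set W} :=
  [set w in betaD' adj par beta t | (inl w : W + U) \notin beta t].

Definition gammaD' (W U N : finType) (adj : W -> U -> bool) (par : N -> N)
  (beta : N -> {set (W + U)}) (t : N) : {set W} :=
  \bigcup_(t' | descendant par t' t) betaD' adj par beta t'.

(* edges are represented as 2-element vertex sets *)
Definition Gedges (W : finType) (eG : rel W) : {set {set W}} :=
  [set [set p.1; p.2] | p in [set p : W * W | eG p.1 p.2]].

Definition edges_in (W : finType) (eG : rel W) (K : {set W}) : {set {set W}} :=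
  [set e in Gedges eG | e \subset K].

Definition is_cycle (W : finType) (eG : rel W) (c : seq W) : bool :=
  [&& uniq c, 2 < size c & cycle eG c].

Definition cycle_edges (W : finType) (c : seq W) : {set {set W}} :=
  [set [set x; next c x] | x in c].

(* Let A(t) be the set of vertices of G whose B-vertex lies in gamma_D(t) but
   not in beta_D(t).  Since the bags containing a vertex form a subtree, the
   sets A(t) form a laminar family.  An edge counted at t joins Fake(t), which
   is contained in A(t), to a vertex outside gamma_D'(t), which contains A(t);
   so it is an edge of K crossing A(t).  If three edges of K on the cycle cross
   some A(t), two of them, u1v1 and u2v2, cross it in the same direction; the
   2-opt move replacing them by the clique edges v1v2 and u1u2 keeps the length
   and the edges outside K, lowers the number of crossings of A(t) by two and,
   by laminarity, does not raise it for any other A(t').  Iterating on the total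
   number of crossings gives a cycle crossing every A(t) at most twice. *)

From Stdlib Require Import Reals.
From mathcomp Require Import all_boot zify.

Set Implicit Arguments.
Unset Strict Implicit.
Unset Printing Implicit Defensive.

Section PairmapRev.
Variables (T R : Type) (f : T -> T -> R).
Implicit Types (x : T) (s : seq T).

Lemma map_pairmap (g : R -> R) x s :
  map g (pairmap f x s) = pairmap (fun a b => g (f a b)) x s.
Proof. by elim: s x => //= y s IHs x; rewrite IHs. Qed.

Lemma last_rev_belast x s : last (last x s) (rev (belast x s)) = x.
Proof. by case: s => //= y s; rewrite rev_cons last_rcons. Qed.

Lemma pairmap_rev x s :
  pairmap f (last x s) (rev (belast x s)) = rev (pairmap (fun a b => f b a) x s).
Proof.
elim: s x => //= y s IHs x.
by rewrite !rev_cons -cats1 pairmap_cat IHs last_rev_belast cats1.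
Qed.

End PairmapRev.

Lemma path_pairmap (T : Type) (e : rel T) x s :
  path e x s = all (fun p => e p.1 p.2) (pairmap pair x s).
Proof. by elim: s x => //= y s IHs x; rewrite IHs. Qed.

Lemma has_pairmap_split (T : Type) (Q : pred (T * T)) x s :
  has Q (pairmap pair x s) ->
  exists s1 y s2, s = s1 ++ y :: s2 /\ Q (last x s1, y).
Proof.
elim: s x => //= y s IHs x /orP[Qxy | /IHs[s1 [z [s2 [-> Qz]]]]].
  by exists [::], y, s.
by exists (y :: s1), z, s2.
Qed.

Section CyclePairs.
Variable T : eqType.
Implicit Types (c s : seq T) (x y : T).

Definition cycle_pairs c : seq (T * T) :=
  if c is x :: s then pairmap pair x (rcons s x) else [::].

Lemma cycle_all_pairs (e : rel T) c :
  cycle e c = all (fun p => e p.1 p.2) (cycle_pairs c).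
Proof. by case: c => //= x s; rewrite path_pairmap. Qed.

Lemma pairmap_fpath (f : T -> T) x s :
  fpath f x s -> pairmap pair x s = [seq (y, f y) | y <- belast x s].
Proof. by elim: s x => //= y s IHs x /andP[/eqP <- /IHs ->]. Qed.

Lemma cycle_pairs_next c : uniq c -> cycle_pairs c = [seq (x, next c x) | x <- c].
Proof.
move=> Uc; have := cycle_next Uc.
by case: c Uc => //= x s _ /pairmap_fpath ->; rewrite belast_rcons.
Qed.

Lemma cycle_pairs_rot n c : uniq c -> cycle_pairs (rot n c) = rot n (cycle_pairs c).
Proof.
move=> Uc; rewrite !cycle_pairs_next ?rot_uniq // -map_rot.
by apply: eq_map => x; rewrite (next_rot n Uc).
Qed.

Lemma cycle_pairs_cat v1 s1 v2 s2 :
  cycle_pairs (v1 :: s1 ++ v2 :: s2) =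
  pairmap pair v1 s1 ++ (last v1 s1, v2) :: rcons (pairmap pair v2 s2) (last v2 s2, v1).
Proof. by rewrite /= rcons_cat pairmap_cat /= -cats1 pairmap_cat cats1. Qed.

Lemma cycle_pairs_rev_cat v1 s1 v2 s2 :
  cycle_pairs (rev (v1 :: s1) ++ v2 :: s2) =
  rev [seq (p.2, p.1) | p <- pairmap pair v1 s1] ++
    (v1, v2) :: rcons (pairmap pair v2 s2) (last v2 s2, last v1 s1).
Proof.
rewrite (lastI v1 s1) rev_rcons /= rcons_cat pairmap_cat pairmap_rev map_pairmap.
by rewrite last_rev_belast /= -cats1 pairmap_cat cats1.
Qed.

Lemma count_cycle_pairs_rev_cat (Q : pred (T * T)) v1 s1 v2 s2 :
  (forall x y, Q (x, y) = Q (y, x)) ->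
  count Q (cycle_pairs (rev (v1 :: s1) ++ v2 :: s2)) +
    (Q (last v2 s2, v1) + Q (last v1 s1, v2)) =
  count Q (cycle_pairs (v1 :: s1 ++ v2 :: s2)) +
    (Q (v1, v2) + Q (last v2 s2, last v1 s1)).
Proof.
move=> Qsym; rewrite cycle_pairs_rev_cat cycle_pairs_cat !count_cat count_rev.
rewrite count_map (eq_count (a2 := Q)) => [|[x y]]; last exact: Qsym.
rewrite /= -!cats1 !count_cat /=; lia.
Qed.

Lemma cycle_pairs_split2 (Q : pred (T * T)) c : uniq c ->
  1 < count Q (cycle_pairs c) ->
  exists n v1 s1 v2 s2,
    [/\ rot n c = v1 :: s1 ++ v2 :: s2, Q (last v1 s1, v2) & Q (last v2 s2, v1)].
Proof.
move=> Uc Q2; have [p pc Qp] : exists2 p, p \in cycle_pairs c & Q p.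
  by apply/hasP; rewrite has_count ltnW.
have [l1 [l2 Ec]] : exists l1 l2, cycle_pairs c = l1 ++ p :: l2.
  by case/splitPr: pc Q2 => l1 l2; exists l1, l2.
have rot_pairs : cycle_pairs (rot (size l1).+1 c) = rcons (l2 ++ l1) p.
  by rewrite cycle_pairs_rot // Ec -cat_rcons -(size_rcons l1 p) rot_size_cat rcons_cat.
case Erot: (rot (size l1).+1 c) rot_pairs => [|v1 rest] /=; first by case: (l2 ++ l1).
rewrite -cats1 pairmap_cat cats1 => /rcons_inj[pairs_rest Ep].
have has_Q : has Q (pairmap pair v1 rest).
  by rewrite pairs_rest has_count; move: Q2; rewrite Ec !count_cat /= Qp; lia.
have [s1 [v2 [s2 [Erest Q1]]]] := has_pairmap_split has_Q.
exists (size l1).+1, v1, s1, v2, s2.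
by rewrite -Ep Erest last_cat in Qp; rewrite Erot Erest.
Qed.

End CyclePairs.

Lemma cycle_edges_pairs (T : finType) (c : seq T) : uniq c ->
  cycle_edges c = [set [set p.1; p.2] | p in cycle_pairs c].
Proof.
move=> Uc; rewrite cycle_pairs_next //; apply/setP => E.
apply/imsetP/imsetP => [[x xc ->] | [_ /mapP[x xc ->] ->]]; last by exists x.
by exists (x, next c x); rewrite ?map_f.
Qed.

Lemma is_cycle_rot (T : finType) (e : rel T) n (c : seq T) :
  is_cycle e (rot n c) = is_cycle e c.
Proof. by rewrite /is_cycle rot_uniq size_rot rot_cycle. Qed.

Lemma cycle_edges_rot (T : finType) n (c : seq T) : uniq c ->
  cycle_edges (rot n c) = cycle_edges c.
Proof.
move=> Uc; apply/setP => E; apply/imsetP/imsetP => -[x xc ->];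
by exists x; rewrite ?mem_rot ?(next_rot n Uc) in xc *.
Qed.

Lemma mem_imset_has (aT rT : finType) (f : aT -> rT) (s : seq aT) y :
  (y \in [set f x | x in s]) = has (fun x => f x == y) s.
Proof. by apply/imsetP/hasP => [[x xs ->] | [x xs /eqP <-]]; exists x. Qed.

Definition laminar (T I : finType) (A : I -> {set T}) : Prop :=
  forall i j, [|| A i \subset A j, A j \subset A i | [disjoint A i & A j]].

Lemma laminar_preimset (aT rT I : finType) (f : aT -> rT) (A : I -> {set rT}) :
  laminar A -> laminar (fun i => f @^-1: A i).
Proof.
move=> lamA i j; case/or3P: (lamA i j) => [ij|ji|dij]; apply/or3P.
- by apply: Or31; apply: preimsetS.
- by apply: Or32; apply: preimsetS.
apply: Or33; rewrite disjoint_subset; apply/subsetP => x.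
by rewrite !inE => /(disjointFr dij) ->.
Qed.

Section RootedTree.
Variables (N : finType) (par : N -> N).
Implicit Types a b t : N.

Lemma descendant_iterP a t : descendant par a t <-> exists n, iter n par a = t.
Proof.
split=> [dat | [n <-]]; last exact: fconnect_iter.
by exists (findex par a t); apply: iter_findex.
Qed.

Lemma descendant_trans a b t :
  descendant par a b -> descendant par b t -> descendant par a t.
Proof. exact: connect_trans. Qed.

Lemma descendant_par a : descendant par a (par a).
Proof. exact: connect1. Qed.

Lemma descendant_parent a t :
  descendant par a t -> a = t \/ descendant par (par a) t.
Proof.
case/descendant_iterP=> [[|n] <-]; [by left | right].
by apply/descendant_iterP; exists n; rewrite iterSr.
Qed.

Lemma descendant_total a t1 t2 : descendant par a t1 -> descendant par a t2 ->
  descendant par t1 t2 \/ descendant par t2 t1.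
Proof.
case/descendant_iterP=> [n1 <-] /descendant_iterP[n2 <-].
have [le12 | /ltnW le21] := leqP n1 n2; [left | right]; apply/descendant_iterP.
  by exists (n2 - n1); rewrite -iterD subnK.
by exists (n1 - n2); rewrite -iterD subnK.
Qed.

Variable r : N.
Hypothesis tree : rooted_tree par r.

(* A cycle of [par] through [a] must reach the fixed point [r], so it is [r] itself. *)
Lemma descendant_anti a b : descendant par a b -> descendant par b a -> a = b.
Proof.
case/descendant_iterP=> [[<- //|n] ab] /descendant_iterP[m ba].
have [par_r /(_ a)[K aK]] := tree.
have period k : iter (k * (m + n.+1)) par a = a.
  by elim: k => //= k IHk; rewrite mulSn iterD IHk iterD ab.
have a_r : a = r.
  have le_K : K <= K * (m + n.+1) by rewrite leq_pmulr // addnS.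
  by rewrite -(period K) -(subnK le_K) iterD aK iter_fix.
by rewrite -ab a_r iter_fix.
Qed.

End RootedTree.

Definition forgotten (V N : finType) (par : N -> N) (beta : N -> {set V}) t :
  {set V} := gammaD par beta t :\: beta t.

Section TreeDecomposition.
Variables (V N : finType) (e : rel V) (par : N -> N) (r : N) (beta : N -> {set V}).
Hypothesis td : tree_decomposition e par r beta.
Implicit Types (a b t : N) (v : V).

(* The only tree edge leaving the subtree of [t] is the edge from [t] to its parent. *)
Lemma bag_leaving_subtree v a b t : v \in beta a -> v \in beta b ->
  descendant par a t -> ~~ descendant par b t -> v \in beta t.
Proof.
case: td => _ _ _ /(_ v a b) connected va vb.
case/connectP: (connected va vb) => p + -> {vb connected}.
elim: p a va => [|a' p IHp] a va /=; first by move=> _ ->.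
case/andP=> /and3P[/andP[_ edge_aa'] _ va'] path_p dat ndb.
have [da't | nda't] := boolP (descendant par a' t); first exact: IHp da't ndb.
case/orP: edge_aa' => /eqP par_a.
  by case: (descendant_parent dat) => [<- // | ]; rewrite par_a (negbTE nda't).
case/negP: nda't; rewrite -par_a in dat.
exact: descendant_trans (descendant_par _ a') dat.
Qed.

Lemma forgotten_sub t1 t2 :
  descendant par t1 t2 -> forgotten par beta t1 \subset forgotten par beta t2.
Proof.
have [tree _ _ _] := td.
move=> d12; apply/subsetP => v; rewrite !inE => /andP[nv1 /bigcupP[a da va]].
apply/andP; split; last by apply/bigcupP; exists a => //; apply: descendant_trans d12.
apply: contra nv1 => v2; have [d21 | nd21] := boolP (descendant par t2 t1).
  by rewrite (descendant_anti tree d12 d21).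
exact: bag_leaving_subtree va v2 da nd21.
Qed.

Lemma forgotten_disjoint t1 t2 :
  ~~ descendant par t1 t2 -> ~~ descendant par t2 t1 ->
  [disjoint forgotten par beta t1 & forgotten par beta t2].
Proof.
move=> nd12 nd21; rewrite disjoint_subset; apply/subsetP => v.
rewrite !inE => /andP[_ /bigcupP[a da va]]; apply/nandP.
have [da2 | nda2] := boolP (descendant par a t2).
  by case: (descendant_total da da2) => d; [case/negP: nd12 | case/negP: nd21].
have [/bigcupP[b db vb] | ] := boolP (v \in gammaD par beta t2); last by right.
by left; rewrite negbK (bag_leaving_subtree vb va db nda2).
Qed.

Lemma laminar_forgotten : laminar (forgotten par beta).
Proof.
move=> t1 t2; apply/or3P.
have [d12 | nd12] := boolP (descendant par t1 t2).
  by apply: Or31; apply: forgotten_sub.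
have [d21 | nd21] := boolP (descendant par t2 t1).
  by apply: Or32; apply: forgotten_sub.
by apply: Or33; apply: forgotten_disjoint.
Qed.

End TreeDecomposition.

Section Exchange.
Variables (T : finType) (e : rel T) (K : {set T}).
Implicit Types (c : seq T) (I J : {set T}) (x y u v : T).

Definition crossing J (p : T * T) : bool :=
  [&& p.1 \in K, p.2 \in K & (p.1 \in J) != (p.2 \in J)].

Definition ncross J c : nat := count (crossing J) (cycle_pairs c).

Lemma crossing_sym J x y : crossing J (x, y) = crossing J (y, x).
Proof. by rewrite /crossing /= andbCA eq_sym. Qed.

Lemma ncross_rot J n c : uniq c -> ncross J (rot n c) = ncross J c.
Proof.
move=> Uc; rewrite /ncross cycle_pairs_rot //.
by have /permP-> : perm_eq (rot n (cycle_pairs c)) (cycle_pairs c) by rewrite perm_rot.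
Qed.

Lemma ncross_rev_cat J v1 s1 v2 s2 :
  ncross J (rev (v1 :: s1) ++ v2 :: s2) +
    (crossing J (last v2 s2, v1) + crossing J (last v1 s1, v2)) =
  ncross J (v1 :: s1 ++ v2 :: s2) +
    (crossing J (v1, v2) + crossing J (last v2 s2, last v1 s1)).
Proof. exact/count_cycle_pairs_rev_cat/crossing_sym. Qed.

Lemma ncross_rev_cat_leq J v1 s1 v2 s2 :
  (ncross J (rev (v1 :: s1) ++ v2 :: s2) <= ncross J (v1 :: s1 ++ v2 :: s2)) =
  (crossing J (v1, v2) + crossing J (last v2 s2, last v1 s1) <=
   crossing J (last v2 s2, v1) + crossing J (last v1 s1, v2)).
Proof.
rewrite -(leq_add2r (crossing J (last v2 s2, v1) + crossing J (last v1 s1, v2))).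
by rewrite ncross_rev_cat leq_add2l.
Qed.

Lemma ncross_rev_cat_ltn J v1 s1 v2 s2 :
  (ncross J (rev (v1 :: s1) ++ v2 :: s2) < ncross J (v1 :: s1 ++ v2 :: s2)) =
  (crossing J (v1, v2) + crossing J (last v2 s2, last v1 s1) <
   crossing J (last v2 s2, v1) + crossing J (last v1 s1, v2)).
Proof.
rewrite -(ltn_add2r (crossing J (last v2 s2, v1) + crossing J (last v1 s1, v2))).
by rewrite ncross_rev_cat ltn_add2l.
Qed.

Lemma two_crossings_same_direction J c : 2 < ncross J c ->
  exists d, 1 < count [pred p | crossing J p && ((p.1 \in J) == d)] (cycle_pairs c).
Proof.
pose side d := count [pred p | crossing J p && ((p.1 \in J) == d)] (cycle_pairs c).
have -> : ncross J c = side true + side false.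
  rewrite /side /ncross; elim: (cycle_pairs c) => //= p s ->.
  by case: (crossing J p); case: (p.1 \in J) => /=; lia.
move=> cross3; have [le2 | gt2] := leqP 2 (side true); first by exists true.
by exists false; move: cross3 gt2; rewrite /side; lia.
Qed.

(* Laminarity puts both [u]'s or both [v]'s on the same side of [J]; the rest
   is a truth table. *)
Lemma crossing_exchange I J u1 u2 v1 v2 :
  [|| I \subset J, J \subset I | [disjoint I & J]] ->
  u1 \in K -> u2 \in K -> v1 \in K -> v2 \in K ->
  (u1 \in I) = (u2 \in I) -> (v1 \in I) = (v2 \in I) -> (u1 \in I) != (v1 \in I) ->
  crossing J (v1, v2) + crossing J (u1, u2) <= crossing J (u1, v1) + crossing J (u2, v2).
Proof.
rewrite /crossing /= => IJ -> -> -> -> /=.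
case/or3P: IJ; rewrite ?disjoint_subset => /subsetP sub;
move: (sub u1) (sub u2) (sub v1) (sub v2); rewrite ?inE;
by case: (u1 \in I); case: (u2 \in I); case: (v1 \in I); case: (v2 \in I);
   case: (u1 \in J); case: (u2 \in J); case: (v1 \in J); case: (v2 \in J) => //=.
Qed.

Lemma crossing_exchange_self I u1 u2 v1 v2 :
  u1 \in K -> u2 \in K -> v1 \in K -> v2 \in K ->
  (u1 \in I) = (u2 \in I) -> (v1 \in I) = (v2 \in I) -> (u1 \in I) != (v1 \in I) ->
  crossing I (v1, v2) + crossing I (u1, u2) < crossing I (u1, v1) + crossing I (u2, v2).
Proof.
by rewrite /crossing /= => -> -> -> -> <- <-; case: (u1 \in I); case: (v1 \in I).
Qed.

Hypothesis e_sym : symmetric e.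
Hypothesis K_clique : {in K &, forall x y, x != y -> e x y}.

Lemma mem_edges_in x y : e x y -> x \in K -> y \in K -> [set x; y] \in edges_in e K.
Proof.
move=> exy xK yK; rewrite inE subUset !sub1set xK yK !andbT.
by apply/imsetP; exists (x, y); rewrite ?inE.
Qed.

(* With u1 := last v2 s2 and u2 := last v1 s1, the cycle v1..u2 v2..u1 becomes
   u2..v1 v2..u1: the edges u2v2, u1v1 are traded for v1v2, u1u2. *)
Lemma two_opt v1 s1 v2 s2 :
  is_cycle e (v1 :: s1 ++ v2 :: s2) ->
  v1 \in K -> v2 \in K -> last v1 s1 \in K -> last v2 s2 \in K ->
  [/\ is_cycle e (rev (v1 :: s1) ++ v2 :: s2),
      size (rev (v1 :: s1) ++ v2 :: s2) = size (v1 :: s1 ++ v2 :: s2) &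
      cycle_edges (rev (v1 :: s1) ++ v2 :: s2) :\: edges_in e K =
      cycle_edges (v1 :: s1 ++ v2 :: s2) :\: edges_in e K].
Proof.
set c := v1 :: s1 ++ v2 :: s2; set c' := rev (v1 :: s1) ++ v2 :: s2.
set u1 := last v2 s2; set u2 := last v1 s1.
case/and3P=> Uc size_c; rewrite cycle_all_pairs cycle_pairs_cat all_cat /= all_rcons.
case/and4P=> path1 e_u2v2 e_u1v1 path2 v1K v2K u2K u1K.
have perm_c : perm_eq c' c by rewrite /c -cat_cons perm_cat2r perm_rev perm_refl.
have Uc' : uniq c' by rewrite (perm_uniq perm_c).
have size_c' : size c' = size c by apply: perm_size.
have disjXY : {in v2 :: s2, forall y, y \notin v1 :: s1}.
  by move: Uc; rewrite /c -cat_cons cat_uniq => /and3P[_ /hasPn].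
have e_v1v2 : e v1 v2.
  apply: K_clique => //; apply: contraTneq (disjXY v2 (mem_head _ _)) => <-.
  by rewrite negbK mem_head.
have e_u1u2 : e u1 u2.
  apply: K_clique => //; apply: contraTneq (disjXY u1 (mem_last _ _)) => ->.
  by rewrite negbK mem_last.
split => //.
  rewrite /is_cycle Uc' size_c' size_c cycle_all_pairs cycle_pairs_rev_cat.
  rewrite all_cat all_rev all_map /= all_rcons e_v1v2 e_u1u2 path2 !andbT.
  by apply: sub_all path1 => -[x y]; rewrite /= e_sym.
rewrite !cycle_edges_pairs // /c /c' cycle_pairs_rev_cat cycle_pairs_cat.
apply/setP => E; rewrite !in_setD; apply: andb_id2l => nEK; rewrite !mem_imset_has.
have notE x y : e x y -> x \in K -> y \in K -> ([set x; y] == E) = false.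
  by move=> exy xK yK; apply: contraNF nEK => /eqP <-; apply: mem_edges_in.
rewrite !has_cat has_rev has_map /= !has_rcons /= !notE //.
rewrite (@eq_has _ _ (fun p : T * T => [set p.1; p.2] == E)) //.
by case=> x y; rewrite /= setUC.
Qed.

Lemma card_crossing_edges J c : uniq c ->
  #|[set E in cycle_edges c | [&& E \subset K, E :&: J != set0 & E :\: J != set0]]|
    <= ncross J c.
Proof.
move=> Uc; rewrite /ncross -size_filter (cycle_edges_pairs Uc).
apply: leq_trans (card_size _).
apply: leq_trans (leq_imset_card (fun p => [set p.1; p.2]) _).
apply: subset_leq_card; apply/subsetP => _ /setIdP[/imsetP[p pc ->]].
case/and3P=> sub_K /set0Pn[x xEJ] /set0Pn[y yEJ].
move: xEJ yEJ; rewrite !inE => /andP[x_p xJ] /andP[yJ y_p].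
apply/imsetP; exists p => //; rewrite mem_filter pc andbT /crossing.
move: sub_K; rewrite subUset !sub1set => /andP[-> ->] /=.
move: xJ yJ; case/orP: x_p => /eqP->; case/orP: y_p => /eqP->;
by case: (p.1 \in J); case: (p.2 \in J).
Qed.

Variables (I : finType) (A : I -> {set T}).
Hypothesis A_laminar : laminar A.

Definition potential c : nat := \sum_i ncross (A i) c.

Lemma exchange_step c i0 : is_cycle e c -> 2 < ncross (A i0) c ->
  exists c', [/\ is_cycle e c', size c' = size c,
    cycle_edges c' :\: edges_in e K = cycle_edges c :\: edges_in e K &
    potential c' < potential c].
Proof.
move=> cycle_c cross3; have Uc : uniq c by case/and3P: cycle_c.
have [d same_side] := two_crossings_same_direction cross3.
have [n [v1 [s1 [v2 [s2 [Erot]]]]]] := cycle_pairs_split2 Uc same_side.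
rewrite /crossing /= => /andP[/and3P[u2K v2K cross2] /eqP side2].
case/andP=> /and3P[u1K v1K cross1] /eqP side1.
have cycle_R : is_cycle e (v1 :: s1 ++ v2 :: s2) by rewrite -Erot is_cycle_rot.
have [cycle_c' size_c' edges_c'] := two_opt cycle_R v1K v2K u2K u1K.
exists (rev (v1 :: s1) ++ v2 :: s2); split => //.
- by rewrite size_c' -Erot size_rot.
- by rewrite edges_c' -Erot cycle_edges_rot.
have eu : (last v2 s2 \in A i0) = (last v1 s1 \in A i0) by rewrite side1 side2.
have ev : (v1 \in A i0) = (v2 \in A i0).
  move: cross1 cross2; rewrite side1 side2.
  by case: (v1 \in _); case: (v2 \in _); case: (d).
have le_i i :
    ncross (A i) (rev (v1 :: s1) ++ v2 :: s2) <= ncross (A i) (v1 :: s1 ++ v2 :: s2).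
  by rewrite ncross_rev_cat_leq (crossing_exchange (A_laminar i0 i)).
have lt_i0 :
    ncross (A i0) (rev (v1 :: s1) ++ v2 :: s2) < ncross (A i0) (v1 :: s1 ++ v2 :: s2).
  by rewrite ncross_rev_cat_ltn crossing_exchange_self.
have -> : potential c = potential (v1 :: s1 ++ v2 :: s2).
  by rewrite -Erot; apply: eq_bigr => i _; rewrite ncross_rot.
rewrite /potential (bigD1 i0) // [X in _ < X](bigD1 i0) //= -addSn.
by apply: leq_add => //; apply: leq_sum => i _; apply: le_i.
Qed.

Lemma few_crossings_cycle c : is_cycle e c ->
  exists c', [/\ is_cycle e c', size c' = size c,
    cycle_edges c' :\: edges_in e K = cycle_edges c :\: edges_in e K &
    forall i, ncross (A i) c' <= 2].
Proof.
have [m] := ubnP (potential c); elim: m c => // m IHm c lt_pot cycle_c.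
have [few | /forallPn[i0]] := boolP [forall i, ncross (A i) c <= 2].
  by exists c; split => // i; apply: (forallP few).
rewrite -ltnNge => cross3.
have [c1 [cycle_c1 size_c1 edges_c1 pot_c1]] := exchange_step cycle_c cross3.
have [c2 [cycle_c2 size_c2 edges_c2 few_c2]] := IHm c1 (leq_trans pot_c1 lt_pot) cycle_c1.
by exists c2; rewrite size_c2 size_c1 edges_c2 edges_c1.
Qed.

End Exchange.

Section MapGraph.
Variables (W U N : finType) (adj : W -> U -> bool) (par : N -> N).
Variable beta : N -> {set W + U}.
Implicit Type t : N.

Lemma half_square_sym : symmetric (half_square adj).
Proof.
move=> x y; rewrite /half_square eq_sym; congr (_ && _).
by apply/existsP/existsP => -[u /andP[xu yu]]; exists u; rewrite xu yu.
Qed.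

Lemma special_clique_clique s :
  {in special_clique adj s &, forall x y, x != y -> half_square adj x y}.
Proof.
move=> x y; rewrite !inE => xs ys xy; rewrite /half_square xy.
by apply/existsP; exists s; rewrite xs ys.
Qed.

Lemma Fake_sub_forgotten t :
  Fake adj par beta t \subset inl @^-1: forgotten par beta t.
Proof.
by apply/subsetP => w; rewrite !inE => /andP[/orP[-> // | /existsP[s /and3P[_ _ ->]]] ->].
Qed.

Lemma forgotten_sub_gammaD' t :
  inl @^-1: forgotten par beta t \subset gammaD' adj par beta t.
Proof.
apply/subsetP => w; rewrite !inE => /andP[_ /bigcupP[t' dt' wt']].
by apply/bigcupP; exists t' => //; rewrite !inE wt'.
Qed.

Lemma Fake_edges_sub_crossing_edges (e : rel W) (K : {set W}) c t :
  [set E in cycle_edges c :&: edges_in e K |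
     [exists x, exists y, [&& E == [set x; y], x \in Fake adj par beta t :&: K &
                             y \notin gammaD' adj par beta t]]]
  \subset [set E in cycle_edges c | [&& E \subset K,
                                     E :&: inl @^-1: forgotten par beta t != set0 &
                                     E :\: inl @^-1: forgotten par beta t != set0]].
Proof.
apply/subsetP => E; rewrite !inE => /andP[/andP[E_c /andP[_ E_K]]].
case/existsP=> x /existsP[y /and3P[/eqP E_xy /setIP[xF _] y_out]].
rewrite E_c E_K E_xy /=; apply/andP; split; apply/set0Pn.
  by exists x; rewrite in_setI set21; apply: (subsetP (Fake_sub_forgotten t)).
exists y; rewrite in_setD set22 andbT; apply: contra y_out.
exact: (subsetP (forgotten_sub_gammaD' t)).
Qed.

End MapGraph.

Theorem lemma26 (W U N : finType) (eG : rel W) (adj : W -> U -> bool)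
  (k : nat) (par : N -> N) (r : N) (beta : N -> {set (W + U)}) :
  map_graph_with eG adj ->
  (0 < k)%N ->
  nice_tree_decomposition (Bedge adj) par r beta ->
  width_lt_5sqrt2k beta k ->
  forall (c : seq W) (s : U),
    is_cycle eG c ->
    let K := special_clique adj s in
    exists c' : seq W,
      [/\ is_cycle eG c',
          size c' = size c,
          cycle_edges c' :\: edges_in eG K = cycle_edges c :\: edges_in eG K &
          forall t : N,
            (#|[set e in cycle_edges c' :&: edges_in eG K |
                [exists x, exists y,
                   [&& e == [set x; y], x \in Fake adj par beta t :&: K &
                       y \notin gammaD' adj par beta t]]]| <= 4)%N].
Proof.
move=> [eG_half _] _ [td _ _] _ c s cycle_c K.
have eG_sym : symmetric eG by move=> x y; rewrite !eG_half half_square_sym.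
have K_clique : {in K &, forall x y, x != y -> eG x y}.
  by move=> x y xK yK xy; rewrite eG_half (special_clique_clique xK yK).
have A_laminar := laminar_preimset inl (laminar_forgotten td).
have [c' [cycle_c' size_c' edges_c' few]] :=
  few_crossings_cycle eG_sym K_clique A_laminar cycle_c.
exists c'; split => // t; have Uc' : uniq c' by case/and3P: cycle_c'.
have counted_sub := Fake_edges_sub_crossing_edges adj par beta eG K c' t.
apply: leq_trans (subset_leq_card counted_sub) _.
by apply: leq_trans (card_crossing_edges K _ Uc') (leq_trans (few t) _).
Qed.
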